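(* For the system $$u_{1,0}-u_{0,1}-\frac{\alpha-\beta}{1+u_{0,0}v_{1,1}}\,u_{0,0}=0,\qquad v_{1,0}-v_{0,1}+\frac{\alpha-\beta}{1+u_{0,0}v_{1,1}}\,v_{1,1}=0,$$ the pair $$(\rho,\sigma)=\big(\ln|1+u_{-1,0}v_{1,0}|,\ \ \ln|1+u_{-1,0}v_{0,1}|\big)$$ is a conservation law, i.e. $(\mathcal T-1)\rho=(\mathcal S-1)\sigma$ on solutions.
   Context: Unknowns $u,v$ on $\mathbb Z^2$, $u_{i,j}=u(n+i,m+j)$, similarly $v$; $\alpha\neq\beta$ constants. Shifts $\mathcal S:n\mapsto n+1$, $\mathcal T:m\mapsto m+1$, acting by $\mathcal S^k\mathcal T^\ell(f_{i,j})=f_{i+k,j+\ell}$. A conservation law is a pair $(\rho,\sigma)$ of functions of finitely many shifts of $(u,v)$ with $(\mathcal T-1)\rho=(\mathcal S-1)\sigma$ holding for all solutions of the system (on which all arguments of logarithms and denominators are nonzero). *)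

From Stdlib Require Import Reals ZArith.
Open Scope R_scope.

Definition system (alpha beta : R) (u v : Z -> Z -> R) : Prop :=
  forall n m : Z,
    u (n+1)%Z m - u n (m+1)%Z
      - (alpha - beta) / (1 + u n m * v (n+1)%Z (m+1)%Z) * u n m = 0 /\
    v (n+1)%Z m - v n (m+1)%Z
      + (alpha - beta) / (1 + u n m * v (n+1)%Z (m+1)%Z) * v (n+1)%Z (m+1)%Z = 0.

Definition cl_rho (u v : Z -> Z -> R) (n m : Z) : R :=
  ln (Rabs (1 + u (n-1)%Z m * v (n+1)%Z m)).

Definition cl_sigma (u v : Z -> Z -> R) (n m : Z) : R :=
  ln (Rabs (1 + u (n-1)%Z m * v n (m+1)%Z)).

(* Write k = alpha - beta, x = u_{-1,0}, p = u_{0,0}, q = u_{-1,1}, r = v_{1,0},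
   s = v_{0,1}, y = v_{1,1}.  The first equation at (n-1,m) and the second at
   (n,m) give q = p - k x/(1+xs) and r = s - k y/(1+py), so both
   (1+qy)(1+xs) and (1+xr)(1+py) equal (1+py)(1+xs) - kxy.  Taking ln|.| of
   this product identity is exactly (T-1)rho = (S-1)sigma. *)

From Stdlib Require Import Reals ZArith Lra Lia.
Open Scope R_scope.

Lemma ln_Rabs_mult (a b : R) : a <> 0 -> b <> 0 ->
  ln (Rabs (a * b)) = ln (Rabs a) + ln (Rabs b).
Proof.
  intros Ha Hb; rewrite Rabs_mult.
  apply ln_mult; apply Rabs_pos_lt; assumption.
Qed.

Lemma ln_Rabs_sub_of_mult_eq (a b c d : R) :
  a <> 0 -> b <> 0 -> c <> 0 -> d <> 0 -> a * b = c * d ->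
  ln (Rabs a) - ln (Rabs c) = ln (Rabs d) - ln (Rabs b).
Proof.
  intros Ha Hb Hc Hd Habcd.
  assert (Hln : ln (Rabs (a * b)) = ln (Rabs (c * d))) by now rewrite Habcd.
  rewrite !ln_Rabs_mult in Hln by assumption.
  lra.
Qed.

Lemma system_product_identity (k x p q r s y : R) :
  1 + x * s <> 0 -> 1 + p * y <> 0 ->
  p - q - k / (1 + x * s) * x = 0 ->
  r - s + k / (1 + p * y) * y = 0 ->
  (1 + q * y) * (1 + x * s) = (1 + x * r) * (1 + p * y).
Proof.
  intros Hxs Hpy Eu Ev.
  assert (Hq : q = p - k / (1 + x * s) * x) by lra.
  assert (Hr : r = s - k / (1 + p * y) * y) by lra.
  rewrite Hq, Hr; field; split; assumption.
Qed.

Theorem mainTheorem7 (alpha beta : R) (u v : Z -> Z -> R) :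
  alpha <> beta ->
  (forall n m : Z, 1 + u n m * v (n+1)%Z (m+1)%Z <> 0) ->
  (forall n m : Z, 1 + u (n-1)%Z m * v (n+1)%Z m <> 0) ->
  (forall n m : Z, 1 + u (n-1)%Z m * v n (m+1)%Z <> 0) ->
  system alpha beta u v ->
  forall n m : Z,
    cl_rho u v n (m+1)%Z - cl_rho u v n m = cl_sigma u v (n+1)%Z m - cl_sigma u v n m.
Proof.
  intros _ Hdiag Hrho Hsigma Hsys n m.
  unfold cl_rho, cl_sigma.
  replace (n + 1 - 1)%Z with n by lia.
  destruct (Hsys (n-1)%Z m) as [Eu _].
  destruct (Hsys n m) as [_ Ev].
  replace (n - 1 + 1)%Z with n in Eu by lia.
  apply ln_Rabs_sub_of_mult_eq; try apply Hdiag; try apply Hrho; try apply Hsigma.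
  apply (system_product_identity (alpha - beta)); try apply Hdiag; try apply Hsigma;
    assumption.
Qed.
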